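(* Let $G=(V,E)$ with $V=\{v_1,\dots,v_n\}$ be an undirected graph in which every vertex has degree 2 or 3 and which has no cycles of length 3 or 4, and let $\alpha(G)$ be the maximum size of an independent set of $G$. Fix a total order $\pi$ on $V$. Call $v_i$ of type 1 if $\deg(v_i)=3$ and all its neighbors are before it or all are after it in $\pi$; type 2 if $\deg(v_i)=3$ otherwise; type 3 if $\deg(v_i)=2$ and both neighbors are before it or both are after it; type 4 if $\deg(v_i)=2$ otherwise. Construct the DAG $D=(S\uplus I,A)$: create a set $T\subseteq S$ of 4 vertices; for each $i$ create an internal vertex $u_i\in I$ and sets $I_i,O_i\subseteq S$ of 4 vertices each; add all arcs from $I_i$ to $\{u_i\}\cup T$ and all arcs from $u_i$ to $O_i\cup T$; add exactly $14,16,11,12$ arcs (arbitrary ones) from $I_i$ to $O_i$ when $v_i$ has type $1,2,3,4$ respectively; and for each edge $\{v_i,v_j\}\in E$ with $v_i$ before $v_j$ in $\pi$ add the arc $(u_i,u_j)$. Let $m'=|A|$. Then for every integer $k\ge0$, $G$ has an independent set of size at least $k$ if and only if there is an elimination sequence $\sigma$ of vertices of $I$ such that $D_\sigma$ has at most $m'-k$ arcs. Equivalently, the minimum number of arcs of $D_\sigma$ over all elimination sequences $\sigma$ equals $m'-\alpha(G)$.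
   Context: Eliminating a vertex $v$ of a DAG produces the DAG obtained by deleting $v$ and adding every arc $(x,y)$ with $x$ an in-neighbor and $y$ an out-neighbor of $v$ that is not already present. An elimination sequence is a sequence of distinct internal vertices (of any length), and $D_\sigma$ is the result of eliminating them in order. An independent set is a vertex set containing no edge of $G$. *)

From mathcomp Require Import all_boot.
Set Implicit Arguments. Unset Strict Implicit. Unset Printing Implicit Defensive.

(* Graph G: finite vertex type V with a symmetric,
   irreflexive edge relation e.  Total order pi on V: an injective
   ranking pi : V -> nat, "x before y" means pi x < pi y. *)

Section Defs.
Variable V : finType.
Variable e : rel V.
Variable pi : V -> nat.

Definition deg (v : V) : nat := #|[set w | e v w]|.

Definition independent (A : {set V}) : bool :=
  [forall x in A, forall y in A, ~~ e x y].

Definition no_triangle : Prop :=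
  forall a b c : V, e a b -> e b c -> e c a -> False.

Definition no_4cycle : Prop :=
  forall a b c d : V, a != c -> b != d ->
    e a b -> e b c -> e c d -> e d a -> False.

Definition all_nbrs_before (v : V) : bool := [forall w, e v w ==> (pi w < pi v)].
Definition all_nbrs_after (v : V) : bool := [forall w, e v w ==> (pi v < pi w)].
Definition one_sided (v : V) : bool := all_nbrs_before v || all_nbrs_after v.

(* number of arcs from I_i to O_i: 14,16,11,12 for types 1,2,3,4 *)
Definition gadget_count (v : V) : nat :=
  if deg v == 3 then (if one_sided v then 14 else 16)
  else (if one_sided v then 11 else 12).

Definition DV : finType := (('I_4 + V) + ((V * 'I_4) + (V * 'I_4)))%type.
Definition vT (i : 'I_4) : DV := inl (inl i).
Definition vU (v : V) : DV := inl (inr v).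
Definition vI (v : V) (i : 'I_4) : DV := inr (inl (v, i)).
Definition vO (v : V) (i : 'I_4) : DV := inr (inr (v, i)).

Definition internal (x : DV) : bool :=
  match x with inl (inr _) => true | _ => false end.

(* X v = the chosen arcs from I_v to O_v (as pairs of indices) *)
Definition arcD (X : V -> {set 'I_4 * 'I_4}) (x y : DV) : bool :=
  match x, y with
  | inr (inl (v, _)), inl (inr w) => v == w           (* I_v -> u_v *)
  | inr (inl _), inl (inl _) => true                  (* I_v -> T *)
  | inl (inr v), inr (inr (w, _)) => v == w           (* u_v -> O_v *)
  | inl (inr _), inl (inl _) => true                  (* u_v -> T *)
  | inr (inl (v, i)), inr (inr (w, j)) => (v == w) && ((i, j) \in X v)
  | inl (inr v), inl (inr w) => e v w && (pi v < pi w) (* u_v -> u_w *)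
  | _, _ => false
  end.

Definition arcsD (X : V -> {set 'I_4 * 'I_4}) : {set DV * DV} :=
  [set a | arcD X a.1 a.2].

End Defs.

(* A digraph is represented by its arc set (only arcs are counted). *)
Section Elim.
Variable N : finType.

Definition eliminate (A : {set N * N}) (v : N) : {set N * N} :=
  [set a in A | (a.1 != v) && (a.2 != v)] :|:
  [set a : N * N | ((a.1, v) \in A) && ((v, a.2) \in A)].

Definition elim_seq (A : {set N * N}) (s : seq N) : {set N * N} :=
  foldl eliminate A s.
End Elim.

From mathcomp Require Import all_boot zify.
Set Implicit Arguments. Unset Strict Implicit. Unset Printing Implicit Defensive.

(* Eliminating [u v] for all [v] in an independent set [S] deletes the [12 + deg v]
   arcs at each [u v] and creates at most [11 + deg v] new ones, because the gadget
   already contains [5 + 3 deg v + in v * out v] of the arcs from [I v] to [O v].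
   Conversely, for any elimination sequence with eliminated set [S], the arcs along paths
   through one eliminated vertex, or through two adjacent ones, survive; they are pairwise
   distinct since [G] has no 4-cycle and new since [G] has no triangle.  Sharing each
   [4 x 4] block between the gadgets of adjacent eliminated vertices equally, every
   eliminated vertex with an eliminated neighbour creates at least as many arcs as it
   deletes, so the arc count drops by at most the number of eliminated vertices without
   eliminated neighbours, and these form an independent set. *)

Section Elimination.
Variable N : finType.
Implicit Types (A : {set N * N}) (s : seq N).

Definition avoiding s : {set N * N} := [set p | (p.1 \notin s) && (p.2 \notin s)].

Definition through A s : {set N * N} :=
  [set p | [exists z, [&& z \in s, (p.1, z) \in A & (z, p.2) \in A]]].

Lemma elim_seq_rcons A s v : elim_seq A (rcons s v) = eliminate (elim_seq A s) v.
Proof. by rewrite /elim_seq foldl_rcons. Qed.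

Lemma mem_elim_seq_path A s q x y :
  uniq s -> x \notin s -> y \notin s -> all (mem s) q -> uniq q ->
  path (fun a b => (a, b) \in A) x (rcons q y) -> (x, y) \in elim_seq A s.
Proof.
elim/last_ind: s q x y => [|s v IH] q x y.
  by case: q => [|z q] //= _ _ _ _ _; rewrite andbT.
rewrite rcons_uniq !mem_rcons !inE !negb_or => /andP[vs us] /andP[xv xs] /andP[yv ys].
have sub r : v \notin r -> all (mem (rcons s v)) r -> all (mem s) r.
  move=> vr /allP rs; apply/allP => z zr; move: (rs z zr); rewrite /= mem_rcons inE.
  by case/predU1P => // zv; rewrite -zv zr in vr.
rewrite elim_seq_rcons !inE /=.
have [vq|vq] := boolP (v \in q); last first.
  by move=> qs uq p; rewrite xv yv (IH q) ?sub.
case/splitPr: vq => q1 q2; rewrite cat_uniq /= all_cat /= => /and3P[a1 _ a2].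
case/and3P=> uq1 /norP[vq1 _] /andP[vq2 uq2].
rewrite rcons_cat -cat_rcons cat_path last_rcons => /andP[p1 p2].
by apply/orP; right; rewrite (IH q1) ?(IH q2) ?sub.
Qed.

Lemma avoiding_sub_elim_seq A s : uniq s -> A :&: avoiding s \subset elim_seq A s.
Proof.
move=> us; apply/subsetP => -[x y]; rewrite !inE /= => /andP[xyA /andP[xs ys]].
by apply: (mem_elim_seq_path (q := [::])) => //=; rewrite andbT.
Qed.

Lemma elim_seq_sub A s :
  {in s &, forall z w, (z, w) \notin A} ->
  elim_seq A s \subset (A :&: avoiding s) :|: through A s.
Proof.
elim/last_ind: s => [|s v IH] noA.
  by apply/subsetP => p pA; rewrite !inE pA.
have ins z : z \in s -> z \in rcons s v by rewrite mem_rcons inE => ->; rewrite orbT.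
have vs : v \in rcons s v by rewrite mem_rcons mem_head.
have /subsetP IH' : elim_seq A s \subset (A :&: avoiding s) :|: through A s.
  by apply: IH => z w zs ws; apply: noA; rewrite ins.
rewrite elim_seq_rcons; apply/subsetP => -[a b]; rewrite !inE /=.
case/orP => [/andP[/IH' + /andP[av bv]]|/andP[/IH' h1 /IH' h2]].
  rewrite !inE /= => /orP[/andP[-> /andP[as_ bs]]|/existsP[z /and3P[zs h1 h2]]].
    by rewrite !mem_rcons !inE (negbTE av) (negbTE bv) as_ bs.
  by apply/orP; right; apply/existsP; exists z; rewrite h1 h2 ins.
move: h1 h2; rewrite !inE /=.
case/orP => [/andP[h1 _]|/existsP[z /and3P[zs _ zv]]]; last first.
  by move: (noA z v (ins z zs) vs); rewrite zv.
case/orP => [/andP[h2 _]|/existsP[z /and3P[zs vz _]]]; last first.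
  by move: (noA v z vs (ins z zs)); rewrite vz.
by apply/orP; right; apply/existsP; exists v; rewrite vs h1 h2.
Qed.

End Elimination.

Section OrderedNeighbours.
Variables (V : finType) (e : rel V) (pi : V -> nat).
Hypotheses (eirr : irreflexive e) (pi_inj : injective pi).

Lemma independentP (S : {set V}) :
  reflect {in S &, forall x y, ~~ e x y} (independent e S).
Proof.
apply: (iffP forall_inP) => [indS x y xS yS | indS x xS].
  exact: (forall_inP (indS x xS)).
by apply/forall_inP => y; apply: indS.
Qed.

Definition nbrs_before (v : V) : {set V} := [set w | e v w && (pi w < pi v)].
Definition nbrs_after (v : V) : {set V} := [set w | e v w && (pi v < pi w)].

Lemma nbr_before_or_after v w : e v w -> (w \in nbrs_before v) || (w \in nbrs_after v).
Proof.
rewrite !inE => evw; rewrite evw /=.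
by case: ltngtP => // /pi_inj wv; rewrite wv eirr in evw.
Qed.

Lemma deg_before_after v : deg e v = #|nbrs_before v| + #|nbrs_after v|.
Proof.
rewrite /deg (_ : [set w | e v w] = nbrs_before v :|: nbrs_after v).
  rewrite cardsU; suff -> : nbrs_before v :&: nbrs_after v = set0 by rewrite cards0 subn0.
  by apply/setP => w; rewrite !inE; case: ltngtP; rewrite ?andbF.
apply/setP => w; rewrite inE in_setU; apply/idP/idP; first exact: nbr_before_or_after.
by rewrite !inE -andb_orr => /andP[].
Qed.

Lemma all_nbrs_beforeE v : all_nbrs_before e pi v = (#|nbrs_after v| == 0).
Proof.
rewrite cards_eq0; apply/forall_inP/eqP => [before|after0 w evw].
  apply/setP => w; rewrite !inE; apply/negbTE/negP => /andP[evw lt].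
  by move: (ltn_trans lt (before w evw)); rewrite ltnn.
by move: (nbr_before_or_after evw); rewrite after0 !inE orbF => /andP[].
Qed.

Lemma all_nbrs_afterE v : all_nbrs_after e pi v = (#|nbrs_before v| == 0).
Proof.
rewrite cards_eq0; apply/forall_inP/eqP => [after|before0 w evw].
  apply/setP => w; rewrite !inE; apply/negbTE/negP => /andP[evw lt].
  by move: (ltn_trans lt (after w evw)); rewrite ltnn.
by move: (nbr_before_or_after evw); rewrite before0 !inE => /andP[].
Qed.

(* The arc counts 14, 16, 11, 12 of the four vertex types are all 5 + 3 deg + (in * out). *)
Lemma gadget_countE v : deg e v = 2 \/ deg e v = 3 ->
  gadget_count e pi v = 5 + 3 * deg e v + #|nbrs_before v| * #|nbrs_after v|.
Proof.
rewrite /gadget_count /one_sided all_nbrs_beforeE all_nbrs_afterE deg_before_after.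
by case: #|nbrs_before v| #|nbrs_after v| => [|[|[|[|i]]]] [|[|[|[|o]]]] [] //= ->.
Qed.

End OrderedNeighbours.

Section FiberCounting.
Variables T1 T2 : finType.

Definition setSum (A1 : {set T1}) (A2 : {set T2}) : {set T1 + T2} :=
  [set x | match x with inl a => a \in A1 | inr b => b \in A2 end].

Lemma cards_setSum A1 A2 : #|setSum A1 A2| = #|A1| + #|A2|.
Proof.
rewrite -!sum1dep_card big_sumType /= -!sum1_card.
by congr (_ + _); apply: eq_bigl => x; rewrite inE.
Qed.

Lemma cards_fibers (S : {set T1}) (F : T1 -> {set T2}) :
  #|[set p : T1 * T2 | (p.1 \in S) && (p.2 \in F p.1)]| = \sum_(v in S) #|F v|.
Proof.
rewrite -sum1dep_card -(pair_big_dep (mem S) (fun v => mem (F v)) (fun _ _ => 1)) /=.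
by apply: eq_bigr => v _; rewrite sum1_card.
Qed.

End FiberCounting.

(* [b] and [a] count the neighbours before and after a vertex; below they are split into
   eliminated ([bE], [aE]) and not eliminated ([bN], [aN]) ones. *)
Lemma gadget_balance_isolated b a : 2 <= b + a <= 3 ->
  16 - (5 + 3 * (b + a) + b * a) + 4 * a + 4 * b + b * a + 1 = 12 + b + a.
Proof.
move=> ba23; have [b3 a3] : b <= 3 /\ a <= 3 by lia.
nia.
Qed.

Lemma gadget_balance bE bN aE aN : 2 <= bE + bN + (aE + aN) <= 3 ->
  12 + (bE + bN) + (aE + aN) <=
  16 - (5 + 3 * (bE + bN + (aE + aN)) + (bE + bN) * (aE + aN))
  + 4 * aN + 4 * bN + bN * aN + 8 * aE + 8 * bE + (bE + aE == 0).
Proof. by move=> d23; have [|] := eqVneq (bE + aE) 0; nia. Qed.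

Section Reduction.
Variables (V : finType) (e : rel V) (pi : V -> nat) (X : V -> {set 'I_4 * 'I_4}).
Hypotheses (esym : symmetric e) (eirr : irreflexive e) (pi_inj : injective pi).
Hypothesis deg23 : forall v, deg e v = 2 \/ deg e v = 3.
Hypothesis card_X : forall v, #|X v| = gadget_count e pi v.
Hypotheses (no3 : no_triangle e) (no4 : no_4cycle e).

Local Notation A := (arcsD e pi X).
Local Notation before := (nbrs_before e pi).
Local Notation after := (nbrs_after e pi).

Definition eliminated (s : seq (DV V)) : {set V} := [set v | vU v \in s].

Lemma internal_eliminated s x :
  all (@internal V) s -> x \in s -> exists2 v, x = vU v & v \in eliminated s.
Proof.
move=> /allP s_int xs; have := s_int x xs.
by case: x xs => [[t|v]|[[v i]|[v i]]] //= vs _; exists v; rewrite ?inE.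
Qed.

Lemma notin_internal s x : all (@internal V) s -> ~~ internal x -> x \notin s.
Proof. by move=> /allP s_int; apply: contra => /s_int. Qed.

Lemma vU_inj : injective (@vU V).
Proof. by move=> a b []. Qed.

Lemma adj_neq v w : e v w -> v != w.
Proof. by apply: contraTneq => ->; rewrite eirr. Qed.

Lemma arcD_uu a b : ((vU a, vU b) \in A) = e a b && (pi a < pi b).
Proof. by rewrite inE. Qed.

Lemma arcD_indep S : independent e S -> {in S &, forall a b, (vU a, vU b) \notin A}.
Proof. by move=> /independentP indS a b aS bS; rewrite arcD_uu (negbTE (indS a b aS bS)). Qed.

Lemma arcD_indep_seq s : all (@internal V) s -> independent e (eliminated s) ->
  {in s &, forall z w, (z, w) \notin A}.
Proof.
move=> s_int /arcD_indep indS z w zs ws.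
have [a -> aS] := internal_eliminated s_int zs.
have [b -> bS] := internal_eliminated s_int ws.
exact: indS.
Qed.

Definition touch_idx : finType := (('I_4 + V) + (('I_4 + 'I_4) + V))%type.

Definition touch_arc (p : V * touch_idx) : DV V * DV V :=
  let v := p.1 in
  match p.2 with
  | inl (inl i) => (vI v i, vU v)
  | inl (inr a) => (vU a, vU v)
  | inr (inl (inl j)) => (vU v, vO v j)
  | inr (inl (inr t)) => (vU v, vT V t)
  | inr (inr b) => (vU v, vU b)
  end.

Definition touch_fiber (v : V) : {set touch_idx} :=
  setSum (setSum setT (before v)) (setSum (setSum setT setT) (after v)).

Definition touch_set (S : {set V}) : {set V * touch_idx} :=
  [set p | (p.1 \in S) && (p.2 \in touch_fiber p.1)].

Lemma arcs_touching s : all (@internal V) s ->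
  A :\: avoiding s = touch_arc @: touch_set (eliminated s).
Proof.
move=> s_int; apply/setP => p; apply/idP/imsetP => [|[[v k] + ->]].
  case: p => x y; rewrite !inE /= negb_and !negbK => /andP[/orP[xs|ys] xyA].
    have [v xv vS] := internal_eliminated s_int xs; subst x; rewrite inE in vS.
    case: y xyA => [[t|b]|[[w j]|[w j]]] //= xyA.
    - by exists (v, inr (inl (inr t))); rewrite // !inE vS /= ?inE.
    - by exists (v, inr (inr b)); rewrite // !inE vS /= ?inE.
    - by move/eqP: xyA => <-; exists (v, inr (inl (inl j))); rewrite // !inE vS /= ?inE.
  have [v yv vS] := internal_eliminated s_int ys; subst y; rewrite inE in vS.
  case: x xyA => [[t|a]|[[w i]|[w i]]] //= xyA.
  - by exists (v, inl (inr a)); rewrite // !inE vS /= ?inE esym.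
  - by move/eqP: xyA => ->; exists (v, inl (inl i)); rewrite // !inE vS /= ?inE.
rewrite !inE /= => /andP[vS].
case: k => [[i|a]|[[j|t]|b]]; rewrite /= !inE ?vS ?andbF ?eqxx //.
by case/andP=> eva ->; rewrite esym eva.
Qed.

Lemma touch_arc_inj S : independent e S -> {in touch_set S &, injective touch_arc}.
Proof.
move=> /arcD_indep indS [v k] [v' k']; rewrite !inE /= => /andP[vS vk] /andP[v'S v'k'].
case: k vk => [[i|a]|[[j|t]|b]]; case: k' v'k' => [[i'|a']|[[j'|t']|b']] //= v'k' vk [].
all: try by move=> -> ->.
- move=> ? ?; subst; case/negP: (indS _ _ v'S vS).
  by rewrite arcD_uu esym; move: vk; rewrite !inE /= ?inE.
- by move=> -> _ ->.
- move=> ? ?; subst; case/negP: (indS _ _ vS v'S).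
  by rewrite arcD_uu; move: vk; rewrite !inE /= ?inE.
Qed.

Lemma card_touch_set S : #|touch_set S| = \sum_(v in S) (12 + #|before v| + #|after v|).
Proof.
by rewrite cards_fibers; apply: eq_bigr => v _; rewrite !cards_setSum !cardsT !card_ord; lia.
Qed.

Definition low : {set 'I_4} := [set i : 'I_4 | i < 2].

(* Candidate arcs created by eliminating [u v]: [I v -> O v] outside [X v], [I v -> u b],
   [u a -> O v] and [u a -> u b] for non-eliminated neighbours [a] before and [b] after
   [v], and for each eliminated neighbour half of the [4 x 4] block joining the two
   gadgets: rows [low] for a later neighbour, the other rows for an earlier one. *)
Definition fresh_idx : finType :=
  ((('I_4 * 'I_4 + 'I_4 * V) + (V * 'I_4 + V * V)) +
   (V * ('I_4 * 'I_4) + V * ('I_4 * 'I_4)))%type.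

Definition fresh_arc (p : V * fresh_idx) : DV V * DV V :=
  let v := p.1 in
  match p.2 with
  | inl (inl (inl (i, j))) => (vI v i, vO v j)
  | inl (inl (inr (i, b))) => (vI v i, vU b)
  | inl (inr (inl (a, j))) => (vU a, vO v j)
  | inl (inr (inr (a, b))) => (vU a, vU b)
  | inr (inl (b, (i, j))) => (vI v i, vO b j)
  | inr (inr (a, (i, j))) => (vI a i, vO v j)
  end.

Definition fresh_fiber (S : {set V}) (v : V) : {set fresh_idx} :=
  setSum
    (setSum (setSum (~: X v) (setX setT (after v :\: S)))
            (setSum (setX (before v :\: S) setT) (setX (before v :\: S) (after v :\: S))))
    (setSum (setX (after v :&: S) (setX low setT))
            (setX (before v :&: S) (setX (~: low) setT))).

Definition fresh_set (S : {set V}) : {set V * fresh_idx} :=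
  [set p | (p.1 \in S) && (p.2 \in fresh_fiber S p.1)].

Definition fresh_count (S : {set V}) (v : V) : nat :=
  16 - #|X v| + 4 * #|after v :\: S| + 4 * #|before v :\: S|
  + #|before v :\: S| * #|after v :\: S| + 8 * #|after v :&: S| + 8 * #|before v :&: S|.

Lemma card_fresh_set S : #|fresh_set S| = \sum_(v in S) fresh_count S v.
Proof.
have low2 : #|low| = 2 by rewrite -sum1dep_card big_mkcond !big_ord_recr big_ord0.
rewrite cards_fibers; apply: eq_bigr => v _.
rewrite /fresh_count !cards_setSum !cardsX [#|~: X v|]cardsCs [#|~: low|]cardsCs !setCK.
by rewrite !cardsT card_prod !card_ord low2; lia.
Qed.

Lemma fresh_arc_inj S : {in fresh_set S &, injective fresh_arc}.
Proof.
move=> [v k] [v' k']; rewrite !inE /= => /andP[vS vk] /andP[v'S v'k'].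
case: k vk => [[[[i j]|[i b]]|[[a j]|[a b]]]|[[b [i j]]|[a [i j]]]];
case: k' v'k' => [[[[i' j']|[i' b']]|[[a' j']|[a' b']]]|[[b' [i' j']]|[a' [i' j']]]];
rewrite !inE /= => v'k' vk [] //; intros; subst => //; move: vk v'k'; rewrite ?inE /= ?eirr /=.
all: try by move=> *.
- case: (eqVneq v v') => [-> //|nvv'].
  move=> /and3P[/and3P[_ eva lta] _ /andP[evb ltb]] /and3P[/and3P[_ ev'a _] _ /andP[ev'b _]].
  case: (@no4 a' v b' v') => //; rewrite 1?esym //.
  by apply: contraTneq (ltn_trans lta ltb) => ->; rewrite ltnn.
all: by move=> /and3P[_ + _] /and3P[_ + _]; case: (i' < 2).
Qed.

Lemma fresh_arc_notin S p : p \in fresh_set S -> fresh_arc p \notin A.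
Proof.
case: p => v k; rewrite !inE /= => /andP[vS].
case: k => [[[[i j]|[i b]]|[[a j]|[a b]]]|[[b [i j]]|[a [i j]]]]; rewrite !inE /=.
- by rewrite eqxx.
- by case/and3P=> _ /adj_neq.
- by rewrite andbT eq_sym => /and3P[_ /adj_neq].
- case/and3P=> /and3P[_ eva _] _ /andP[evb _]; apply/negP => /andP[eab _].
  by apply: (@no3 a b v eab); first rewrite esym.
- by case/and3P=> /andP[/andP[/adj_neq/negbTE-> _] _].
- by rewrite eq_sym => /and3P[/andP[/andP[/adj_neq/negbTE-> _] _]].
Qed.

Lemma fresh_arc_elim s p : uniq s -> all (@internal V) s ->
  p \in fresh_set (eliminated s) -> fresh_arc p \in elim_seq A s.
Proof.
move=> us s_int; case: p => v k; rewrite !inE /= => /andP[vs].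
have nI w i : vI w i \notin s by apply: notin_internal.
have nO w i : vO w i \notin s by apply: notin_internal.
case: k => [[[[i j]|[i b]]|[[a j]|[a b]]]|[[b [i j]]|[a [i j]]]]; rewrite !inE /=.
- by move=> _; apply: (mem_elim_seq_path (q := [:: vU v]));
    rewrite /= ?us ?nI ?nO ?vs ?inE /= ?eqxx.
- by case/and3P=> bs evb ltb; apply: (mem_elim_seq_path (q := [:: vU v]));
    rewrite /= ?us ?nI ?nO ?vs ?bs ?inE /= ?eqxx ?evb ?ltb.
- by rewrite andbT => /and3P[as_ eva lta]; apply: (mem_elim_seq_path (q := [:: vU v]));
    rewrite /= ?us ?nI ?nO ?vs ?as_ ?inE /= ?eqxx 1?esym ?eva ?lta.
- by case/and3P=> /and3P[as_ eva lta] bs /andP[evb ltb];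
    apply: (mem_elim_seq_path (q := [:: vU v]));
    rewrite /= ?us ?nI ?nO ?vs ?as_ ?bs ?inE /= ?eqxx 1?esym ?eva ?lta ?evb ?ltb.
- case/and3P=> /andP[/andP[evb ltb] bs] _ _.
  by apply: (mem_elim_seq_path (q := [:: vU v; vU b]));
    rewrite /= ?us ?nI ?nO ?vs ?bs ?inE /= ?eqxx ?evb ?ltb
            ?(inj_eq vU_inj) ?(adj_neq evb).
- case/and3P=> /andP[/andP[eva lta] as_] _ _.
  by apply: (mem_elim_seq_path (q := [:: vU a; vU v]));
    rewrite /= ?us ?nI ?nO ?vs ?as_ ?inE /= ?eqxx 1?esym ?eva ?lta
            ?(inj_eq vU_inj) 1?(eq_sym a v) ?(adj_neq eva).
Qed.

Lemma through_sub s : all (@internal V) s -> independent e (eliminated s) ->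
  through A s \subset (A :&: avoiding s) :|: fresh_arc @: fresh_set (eliminated s).
Proof.
move=> s_int indS; have noA := arcD_indep_seq s_int indS.
apply/subsetP => -[x y]; rewrite inE => /existsP[z /and3P[zs xz zy]].
have [xyA|xyNA] := boolP ((x, y) \in A).
  apply/setUP; left; rewrite in_setI xyA inE /=; apply/andP; split.
    by apply/negP => xs; move: (noA _ _ xs zs); rewrite xz.
  by apply/negP => ys; move: (noA _ _ zs ys); rewrite zy.
apply/setUP; right; have [v zv vS] := internal_eliminated s_int zs; subst z.
move: xyNA xz zy; rewrite !inE /=.
have nadj w : e v w -> vU w \notin s.
  move=> evw; apply: contraL evw => ws.
  by move/independentP: indS; apply; rewrite // inE.
rewrite inE in vS.
case: x => [[t|a]|[[w i]|[w i]]]; case: y => [[t'|b]|[[w' j]|[w' j]]] //=.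
- move=> _ /andP[+ lta] /andP[evb ltb]; rewrite esym => eva.
  apply/imsetP; exists (v, inl (inr (inr (a, b)))) => //.
  by rewrite !inE /= ?inE /= vS (nadj a eva) (nadj b evb) eva lta evb ltb.
- move=> _ /andP[+ lta] /eqP <-; rewrite esym => eva.
  apply/imsetP; exists (v, inl (inr (inl (a, j)))) => //.
  by rewrite !inE /= ?inE /= vS (nadj a eva) eva lta.
- move=> _ /eqP -> /andP[evb ltb].
  apply/imsetP; exists (v, inl (inl (inr (i, b)))) => //.
  by rewrite !inE /= ?inE /= vS (nadj b evb) evb ltb.
- move=> + /eqP wv /eqP vw; subst; rewrite eqxx /= => ijX.
  by apply/imsetP; exists (w', inl (inl (inl (i, j)))); rewrite // !inE /= ?inE /= vS.
Qed.

Lemma card_XE v :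
  #|X v| = 5 + 3 * (#|before v| + #|after v|) + #|before v| * #|after v|.
Proof. by rewrite card_X gadget_countE // (deg_before_after (pi := pi)). Qed.

Lemma deg23_before_after v : 2 <= #|before v| + #|after v| <= 3.
Proof. by rewrite -(deg_before_after (pi := pi)) //; case: (deg23 v) => ->. Qed.

Lemma nbrs_disjoint (S B : {set V}) v : {in S, forall w, ~~ e v w} ->
  B \subset [set w | e v w] -> [disjoint B & S].
Proof.
move=> isoS /subsetP Bnbr; rewrite disjoint_subset; apply/subsetP => w /Bnbr.
by rewrite !inE; apply: contraL (isoS w).
Qed.

Lemma fresh_count_isolated (S : {set V}) v : {in S, forall w, ~~ e v w} ->
  fresh_count S v + 1 = 12 + #|before v| + #|after v|.
Proof.
move=> isoS.
have /(nbrs_disjoint isoS) bS : before v \subset [set w | e v w].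
  by apply/subsetP => w; rewrite !inE => /andP[].
have /(nbrs_disjoint isoS) aS : after v \subset [set w | e v w].
  by apply/subsetP => w; rewrite !inE => /andP[].
rewrite /fresh_count card_XE (setDidPl bS) (setDidPl aS).
rewrite (disjoint_setI0 bS) (disjoint_setI0 aS) cards0.
have := gadget_balance_isolated (deg23_before_after v); lia.
Qed.

Lemma fresh_count_ge (S : {set V}) v :
  12 + #|before v| + #|after v| <= fresh_count S v + [forall w in S, ~~ e v w].
Proof.
have isoS : (#|before v :&: S| + #|after v :&: S| == 0) <= [forall w in S, ~~ e v w].
  case: eqP => //= /eqP; rewrite addn_eq0 !cards_eq0 lt0b => /andP[/eqP b0 /eqP a0].
  apply/forall_inP => w wS; apply/negP => /(nbr_before_or_after eirr pi_inj) /orP[wb|wa].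
    have : w \in before v :&: S by rewrite inE wb wS.
    by rewrite b0 inE.
  have : w \in after v :&: S by rewrite inE wa wS.
  by rewrite a0 inE.
have := deg23_before_after v.
rewrite /fresh_count card_XE -(cardsID S (before v)) -(cardsID S (after v)) => /gadget_balance.
lia.
Qed.

Lemma elim_seq_of_indep (S : {set V}) : independent e S ->
  exists2 s, uniq s /\ all (@internal V) s & #|elim_seq A s| + #|S| <= #|A|.
Proof.
move=> indS; set s := [seq vU v | v <- enum S].
have s_uniq : uniq s by rewrite (map_inj_uniq vU_inj) enum_uniq.
have s_int : all (@internal V) s by apply/allP => _ /mapP[v _ ->].
have sS : eliminated s = S by apply/setP => v; rewrite inE (mem_map vU_inj) mem_enum.
have indS' : independent e (eliminated s) by rewrite sS.
exists s => //.
have elim_le : #|elim_seq A s| <= #|A :&: avoiding s| + #|fresh_set S|.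
  have sub : elim_seq A s \subset (A :&: avoiding s) :|: fresh_arc @: fresh_set S.
    apply: subset_trans (elim_seq_sub (arcD_indep_seq s_int indS')) _.
    by rewrite subUset subsetUl -sS through_sub.
  apply: leq_trans (subset_leq_card sub) _; apply: leq_trans (leq_card_setU _ _).1 _.
  by rewrite leq_add2l leq_imset_card.
have touch_eq : #|A :\: avoiding s| = #|touch_set S|.
  by rewrite arcs_touching // sS (card_in_imset (touch_arc_inj indS)).
have balance : #|fresh_set S| + #|S| = #|touch_set S|.
  rewrite card_fresh_set card_touch_set -sum1_card -big_split; apply: eq_bigr => v vS.
  by apply: fresh_count_isolated => w; move/independentP: indS; apply.
have := cardsID (avoiding s) A; lia.
Qed.

Lemma indep_of_elim_seq s : uniq s -> all (@internal V) s ->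
  exists2 J, independent e J & #|A| <= #|elim_seq A s| + #|J|.
Proof.
move=> s_uniq s_int; set S := eliminated s.
set J := [set v in S | [forall w in S, ~~ e v w]].
exists J.
  by apply/independentP => v w /setIdP[_ /forall_inP viso] /setIdP[/viso].
have elim_ge : #|A :&: avoiding s| + #|fresh_set S| <= #|elim_seq A s|.
  have disj : (A :&: avoiding s) :&: (fresh_arc @: fresh_set S) = set0.
    apply/setP => p; rewrite !in_setI in_set0.
    apply/negP => /andP[/andP[pA _] /imsetP[q qF pq]].
    by move: (fresh_arc_notin qF); rewrite -pq pA.
  rewrite -(card_in_imset (@fresh_arc_inj S)) -cardsUI disj cards0 addn0.
  rewrite subset_leq_card // subUset avoiding_sub_elim_seq //.
  by apply/subsetP => _ /imsetP[p pF ->]; apply: fresh_arc_elim.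
have touch_le : #|A :\: avoiding s| <= #|touch_set S|.
  by rewrite arcs_touching // leq_imset_card.
have balance : #|touch_set S| <= #|fresh_set S| + #|J|.
  rewrite card_touch_set card_fresh_set -sum1dep_card big_mkcondr -big_split /=.
  by apply: leq_sum => v _; have := fresh_count_ge S v; case: [forall _ in _, _].
have := cardsID (avoiding s) A; lia.
Qed.

End Reduction.

Theorem mainTheorem6 (V : finType) (e : rel V) (pi : V -> nat)
  (esym : symmetric e) (eirr : irreflexive e)
  (hdeg : forall v, deg e v = 2 \/ deg e v = 3)
  (h3 : no_triangle e) (h4 : no_4cycle e)
  (hpi : injective pi)
  (X : V -> {set 'I_4 * 'I_4})
  (hX : forall v, #|X v| = gadget_count e pi v) :
  forall k : nat,
    (exists A : {set V}, independent e A /\ k <= #|A|) <->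
    (exists s : seq (DV V),
        [/\ uniq s, all (@internal V) s &
            #|elim_seq (arcsD e pi X) s| + k <= #|arcsD e pi X|]).
Proof.
move=> k; split => [[S [indS leS]]|[s [s_uniq s_int elim_k]]].
  have [s [s_uniq s_int] elimS] := elim_seq_of_indep esym eirr hpi hdeg hX indS.
  by exists s; split => //; apply: leq_trans elimS; rewrite leq_add2l.
have [J indJ AJ] := indep_of_elim_seq esym eirr hpi hdeg hX h3 h4 s_uniq s_int.
by exists J; split => //; lia.
Qed.
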